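(* Let $\mathfrak g$ be a right Leibniz algebra with bracket $[\,,]$ and let $R$ be a left Leibniz dual algebra with product $(r,s)\mapsto rs$, over a common field. Then the tensor product $\mathfrak g\otimes R$ with multiplication $(x\otimes r)\circ(y\otimes s)=[x,y]\otimes rs$ is a right-symmetric algebra.
   Context: A right Leibniz algebra satisfies $[a,[b,c]]-[[a,b],c]+[[a,c],b]=0$. A left Leibniz dual algebra satisfies $(rs)t=r(st+ts)$. An algebra is right-symmetric if $X\circ(Y\circ Z)-(X\circ Y)\circ Z=X\circ(Z\circ Y)-(X\circ Z)\circ Y$ for all $X,Y,Z$. *)

From mathcomp Require Import all_boot all_algebra.
Set Implicit Arguments. Unset Strict Implicit. Unset Printing Implicit Defensive.
Import GRing.Theory.
Local Open Scope ring_scope.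

Section Defs.
Variable K : fieldType.

Definition lin (U W : lmodType K) (h : U -> W) : Prop :=
  forall (a : K) (x y : U), h (a *: x + y) = a *: h x + h y.

Definition bilin (U V W : lmodType K) (f : U -> V -> W) : Prop :=
  (forall u, lin (f u)) /\ (forall v, lin (fun u => f u v)).

Definition is_tensor_product (U V T : lmodType K) (tens : U -> V -> T) : Prop :=
  bilin tens /\
  forall (W : lmodType K) (f : U -> V -> W), bilin f ->
    exists h : T -> W, [/\ lin h, (forall u v, h (tens u v) = f u v) &
      forall h' : T -> W, lin h' -> (forall u v, h' (tens u v) = f u v) ->
        forall t, h' t = h t].

Definition right_Leibniz_algebra (g : lmodType K) (br : g -> g -> g) : Prop :=
  bilin br /\
  forall a b c, br a (br b c) - br (br a b) c + br (br a c) b = 0.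

Definition left_Leibniz_dual_algebra (R : lmodType K) (m : R -> R -> R) : Prop :=
  bilin m /\ forall r s t, m (m r s) t = m r (m s t + m t s).

Definition right_symmetric_algebra (A : lmodType K) (m : A -> A -> A) : Prop :=
  bilin m /\
  forall X Y Z, m X (m Y Z) - m (m X Y) Z = m X (m Z Y) - m (m X Z) Y.

End Defs.

From mathcomp Require Import all_boot all_algebra.
Set Implicit Arguments. Unset Strict Implicit. Unset Printing Implicit Defensive.
Import GRing.Theory.
Local Open Scope ring_scope.

(* Both associators (X,Y,Z) and (X,Z,Y) of the product on g (x) R are
   trilinear, so it suffices to compare them on pure tensors.  There, writing
   x r for x (x) r, the Leibniz identities give
     ((x r)(y s))(z t) - (x r)((y s)(z t)) = [[x,y],z] r(ts) + [[x,z],y] r(st),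
   which is symmetric under (y,s) <-> (z,t). *)

Section Linearity.
Variable K : fieldType.
Implicit Types U V W Z : lmodType K.

Lemma linD U W (h : U -> W) : lin h -> forall x y, h (x + y) = h x + h y.
Proof. by move=> hL x y; have := hL 1 x y; rewrite !scale1r. Qed.

Lemma linB U W (h : U -> W) : lin h -> forall x y, h (x - y) = h x - h y.
Proof.
by move=> hL x y; have := hL (-1) y x; rewrite !scaleN1r addrC [RHS]addrC.
Qed.

Lemma lin_sub U W (f h : U -> W) : lin f -> lin h -> lin (fun x => f x - h x).
Proof.
move=> fL hL a x y; rewrite fL hL scalerBr opprD !addrA.
by congr (_ - _); rewrite addrAC.
Qed.

Lemma lin_comp U V W (f : V -> W) (h : U -> V) : lin f -> lin h -> lin (f \o h).
Proof. by move=> fL hL a x y /=; rewrite hL fL. Qed.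

Definition trilin U V W Z (f : U -> V -> W -> Z) : Prop :=
  [/\ forall v w, lin (fun u => f u v w), forall u w, lin (fun v => f u v w)
    & forall u v, lin (f u v)].

Lemma trilin_swap23 U V W Z (f : U -> V -> W -> Z) :
  trilin f -> trilin (fun u w v => f u v w).
Proof. by case. Qed.

End Linearity.

Section TensorProduct.
Variables (K : fieldType) (U V T : lmodType K) (tens : U -> V -> T).
Hypothesis tensT : is_tensor_product tens.

Lemma tensor_lin_eq (W : lmodType K) (f h : T -> W) : lin f -> lin h ->
  (forall u v, f (tens u v) = h (tens u v)) -> forall t, f t = h t.
Proof.
case: tensT => -[tens1 tens2] univ fL hL fh t.
have hT_bilin : bilin (fun u v => h (tens u v)).
  by split=> [u | v]; apply: lin_comp hL _.
have [k [_ _ k_uniq]] := univ W _ hT_bilin.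
by rewrite (k_uniq f fL fh) (k_uniq h hL).
Qed.

Lemma tensor_trilin_eq (W : lmodType K) (f h : T -> T -> T -> W) :
  trilin f -> trilin h ->
  (forall x r y s z t,
     f (tens x r) (tens y s) (tens z t) = h (tens x r) (tens y s) (tens z t)) ->
  forall X Y Z, f X Y Z = h X Y Z.
Proof.
move=> [f1 f2 f3] [h1 h2 h3] fh X Y Z.
have fh3 x r y s : forall Z, f (tens x r) (tens y s) Z = h (tens x r) (tens y s) Z.
  by apply: tensor_lin_eq => // z t; apply: fh.
have fh2 x r : forall Y, f (tens x r) Y Z = h (tens x r) Y Z.
  by apply: tensor_lin_eq => // y s; apply: fh3.
by move: X; apply: tensor_lin_eq => // x r; apply: fh2.
Qed.

End TensorProduct.

Section Associator.
Variables (K : fieldType) (A : lmodType K) (m : A -> A -> A).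

Definition assoc X Y Z := m (m X Y) Z - m X (m Y Z).

Lemma assoc_trilin : bilin m -> trilin assoc.
Proof.
move=> [m1 m2]; split=> [Y Z | X Z | X Y]; apply: lin_sub.
- exact: lin_comp (m2 Z) (m2 Y).
- exact: m2.
- exact: lin_comp (m2 Z) (m1 X).
- exact: lin_comp (m1 X) (m2 Z).
- exact: m1.
- exact: lin_comp (m1 X) (m1 Y).
Qed.

Lemma right_symmetric_assoc :
  bilin m -> (forall X Y Z, assoc X Y Z = assoc X Z Y) ->
  right_symmetric_algebra m.
Proof.
by move=> mB assocC; split=> // X Y Z; apply: oppr_inj; rewrite !opprB; exact: assocC.
Qed.

End Associator.

Lemma right_Leibniz_brA (K : fieldType) (g : lmodType K) (br : g -> g -> g) :
  right_Leibniz_algebra br ->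
  forall a b c, br a (br b c) = br (br a b) c - br (br a c) b.
Proof.
by move=> [_ brL] a b c; apply/eqP; rewrite -subr_eq0 opprB addrA addrAC brL.
Qed.

Section CurrentAlgebra.
Variables (K : fieldType) (g R T : lmodType K).
Variables (br : g -> g -> g) (mR : R -> R -> R).
Variables (tens : g -> R -> T) (circ : T -> T -> T).
Hypotheses (brL : right_Leibniz_algebra br)
  (mRL : left_Leibniz_dual_algebra mR) (tensB : bilin tens)
  (circE : forall x r y s, circ (tens x r) (tens y s) = tens (br x y) (mR r s)).

Lemma assoc_tens x r y s z t :
  assoc circ (tens x r) (tens y s) (tens z t) =
  tens (br (br x y) z) (mR r (mR t s)) + tens (br (br x z) y) (mR r (mR s t)).
Proof.
case: mRL tensB => -[mR1 _] mRA [tens1 tens2].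
rewrite /assoc !circE mRA (right_Leibniz_brA brL) (linD (mR1 r)).
rewrite (linD (tens1 _)) (linB (tens2 _)) opprB.
by rewrite addrC addrA [_ + tens _ (mR r (mR t s))]addrC subrK addrC.
Qed.

End CurrentAlgebra.

Theorem mainTheorem17 (K : fieldType) (g R T : lmodType K)
    (br : g -> g -> g) (mR : R -> R -> R)
    (tens : g -> R -> T) (circ : T -> T -> T) :
  right_Leibniz_algebra br ->
  left_Leibniz_dual_algebra mR ->
  is_tensor_product tens ->
  bilin circ ->
  (forall x r y s, circ (tens x r) (tens y s) = tens (br x y) (mR r s)) ->
  right_symmetric_algebra circ.
Proof.
move=> brL mRL tensT circB circE.
have assocT := assoc_trilin circB.
apply: right_symmetric_assoc => //.
apply: (tensor_trilin_eq tensT assocT (trilin_swap23 assocT)) => x r y s z t.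
have tensB := tensT.1.
by rewrite !(assoc_tens brL mRL tensB circE) addrC.
Qed.
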